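(* Let $p$ be a prime and $G$ a totally disconnected locally compact group. The following are equivalent: 1. $G$ is locally elliptic. 2. $G$ satisfies Reiter's property for $\varepsilon = 0$. 3. $G$ satisfies Reiter's property for some $\varepsilon \in [0,1]$. 4. $G$ satisfies Reiter's property for $\varepsilon = 1$.
   Context: $C_{00}(G,\mathbb{Q}_p)$ denotes compactly supported continuous functions $G\to\mathbb{Q}_p$, with sup norm $\|\cdot\|_\infty$ (using the $p$-adic norm) and action $(g\cdot f)(x)=f(g^{-1}x)$. For $\varepsilon\in(0,1]$, $G$ satisfies Reiter's property for $\varepsilon$ if for every compact subset $K\subset G$ there exists $f\in C_{00}(G,\mathbb{Q}_p)$ with $\|f\|_\infty=1$ and $\|g\cdot f-f\|_\infty<\varepsilon$ for all $g\in K$; for $\varepsilon=0$ it means that for every compact $K$ there exists such $f$ with $\|f\|_\infty=1$ and $g\cdot f=f$ for all $g\in K$. $G$ is locally elliptic if every finite subset of $G$ is contained in a compact subgroup. *)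

From HB Require Import structures.
From mathcomp Require Import all_boot all_order all_algebra.
From mathcomp Require Import all_classical all_reals all_analysis Rstruct.
From mathcomp Require Import ring lra.
Set Implicit Arguments. Unset Strict Implicit. Unset Printing Implicit Defensive.
Import Order.TTheory GRing.Theory Num.Theory.
Local Open Scope classical_set_scope.
Local Open Scope ring_scope.

(* An element x of Q_p is represented by the family (r n)_{n : int}   *)
(* where r n is the canonical representative in [0, p^n) of the      *)
(* class x mod p^n Z_p  (Q_p / p^n Z_p = Z[1/p] / p^n Z[1/p]).        *)
(* The base used is maxn p 2, which equals p for every prime p.       *)

Definition pbase (p : nat) : rat := (maxn p 2)%:R.

Definition is_padic (p : nat) (r : int -> rat) : Prop :=
  [/\ forall n : int, 0 <= r n < pbase p ^ n,
      forall n : int, (r (n + 1) - r n) / pbase p ^ n \is a Num.int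
    & exists N : int, forall n : int, n <= N -> r n = 0].

Definition Qp (p : nat) := {r : int -> rat | is_padic p r}.

Lemma pbase_gt0 p : 0 < pbase p.
Proof. by rewrite /pbase ltr0n; apply: leq_trans (leq_maxr p 2). Qed.

Lemma pbase_unit p : pbase p \is a GRing.unit.
Proof. by rewrite unitfE gt_eqF // pbase_gt0. Qed.

Lemma pbaseX_gt0 p (n : int) : 0 < pbase p ^ n.
Proof. by rewrite exprz_gt0 // pbase_gt0. Qed.

Lemma is_padic0 p : is_padic p (fun _ => 0).
Proof.
split=> [n|n|]; first by rewrite lexx pbaseX_gt0.
  by rewrite subrr mul0r rpred0.
by exists 0.
Qed.

Definition qp0 (p : nat) : Qp p := exist _ (fun _ => 0) (is_padic0 p).

Definition qp_sub_fun p (x y : Qp p) (n : int) : rat :=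
  (proj1_sig x n - proj1_sig y n)
  + (if proj1_sig x n < proj1_sig y n then pbase p ^ n else 0).

Lemma is_padic_sub p (x y : Qp p) : is_padic p (qp_sub_fun x y).
Proof.
case: x y => [x [xr xc [Nx xs]]] [y [yr yc [Ny ys]]]; rewrite /qp_sub_fun /=.
split.
- move=> n; have /andP[x0 x1] := xr n; have /andP[y0 y1] := yr n.
  have P0 := pbaseX_gt0 p n.
  case: ltrP => h /=; apply/andP; split; lra.
- move=> n; have P0 := pbaseX_gt0 p n.
  have E : pbase p ^ (n + 1) = pbase p ^ n * pbase p.
    by rewrite exprzDr ?pbase_unit // expr1z.
  have Hx := xc n; have Hy := yc n.
  have Hp : pbase p \is a Num.int by rewrite /pbase rpred_nat.
  rewrite E.
  case: (x (n + 1) < y (n + 1)); case: (x n < y n).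
  + have -> : (x (n + 1) - y (n + 1) + pbase p ^ n * pbase p - (x n - y n + pbase p ^ n)) / pbase p ^ n
       = (x (n + 1) - x n) / pbase p ^ n - (y (n + 1) - y n) / pbase p ^ n + (pbase p - 1).
      by field; exact: lt0r_neq0.
    by rewrite rpredD ?rpredB ?rpred1.
  + have -> : (x (n + 1) - y (n + 1) + pbase p ^ n * pbase p - (x n - y n + 0)) / pbase p ^ n
       = (x (n + 1) - x n) / pbase p ^ n - (y (n + 1) - y n) / pbase p ^ n + pbase p.
      by field; exact: lt0r_neq0.
    by rewrite rpredD ?rpredB.
  + have -> : (x (n + 1) - y (n + 1) + 0 - (x n - y n + pbase p ^ n)) / pbase p ^ n
       = (x (n + 1) - x n) / pbase p ^ n - (y (n + 1) - y n) / pbase p ^ n - 1.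
      by field; exact: lt0r_neq0.
    by rewrite rpredB ?rpredB ?rpred1.
  + have -> : (x (n + 1) - y (n + 1) + 0 - (x n - y n + 0)) / pbase p ^ n
       = (x (n + 1) - x n) / pbase p ^ n - (y (n + 1) - y n) / pbase p ^ n.
      by field; exact: lt0r_neq0.
    by rewrite rpredB.
- exists (Order.min Nx Ny) => n hn.
  rewrite xs ?ys ?ltxx ?subrr ?mul0r ?addr0 //.
    by apply: le_trans hn _; rewrite ge_min lexx orbT.
  by apply: le_trans hn _; rewrite ge_min lexx.
Qed.

Definition qp_sub p (x y : Qp p) : Qp p := exist _ (qp_sub_fun x y) (is_padic_sub x y).

(* The p-adic absolute value |x|_p = p^(-v(x)), where
   v(x) = sup {n | x \in p^n Z_p} = sup {n | r n = 0};  |0|_p = 0. *)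
Definition qp_abs p (x : Qp p) : Rdefinitions.R :=
  inf [set ((maxn p 2)%:R ^ (- n) : Rdefinitions.R) | n in [set n : int | proj1_sig x n = 0]].

Definition is_top_group (G : topologicalType) (mul : G -> G -> G) (inv : G -> G) (one : G) :=
  [/\ forall x y z, mul x (mul y z) = mul (mul x y) z,
      forall x, mul one x = x /\ mul x one = x,
      forall x, mul (inv x) x = one /\ mul x (inv x) = one,
      continuous (fun xy : G * G => mul xy.1 xy.2)
    & continuous inv].

Definition is_tdlc_group (G : topologicalType) (mul : G -> G -> G) (inv : G -> G) (one : G) :=
  [/\ is_top_group mul inv one, hausdorff_space G,
      locally_compact [set: G] & totally_disconnected [set: G]].

Definition is_subgroup (G : Type) (mul : G -> G -> G) (inv : G -> G) (one : G) (H : set G) :=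
  [/\ H one, forall x y, H x -> H y -> H (mul x y) & forall x, H x -> H (inv x)].

Definition locally_elliptic (G : topologicalType) (mul : G -> G -> G) (inv : G -> G) (one : G) :=
  forall F : set G, finite_set F ->
    exists H : set G, [/\ is_subgroup mul inv one H, compact H & F `<=` H].

Definition qp_continuous (G : topologicalType) p (f : G -> Qp p) :=
  forall (x : G) (e : Rdefinitions.R), 0 < e ->
    \forall y \near x, qp_abs (qp_sub (f y) (f x)) < e.

Definition C00 (G : topologicalType) p (f : G -> Qp p) :=
  qp_continuous f /\ compact (closure [set x | f x <> qp0 p]).

Definition supnorm (G : Type) p (f : G -> Qp p) : Rdefinitions.R :=
  sup [set qp_abs (f x) | x in [set: G]].

Definition gact (G : Type) (mul : G -> G -> G) (inv : G -> G) p (g : G) (f : G -> Qp p) :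
  G -> Qp p := fun x => f (mul (inv g) x).

Definition fsub (G : Type) p (f h : G -> Qp p) : G -> Qp p := fun x => qp_sub (f x) (h x).

Definition reiter (G : topologicalType) (mul : G -> G -> G) (inv : G -> G) (p : nat)
    (eps : Rdefinitions.R) :=
  forall K : set G, compact K ->
    exists f : G -> Qp p, [/\ C00 f, supnorm f = 1 &
      forall g, K g -> supnorm (fsub (gact mul inv g f) f) < eps].

Definition reiter0 (G : topologicalType) (mul : G -> G -> G) (inv : G -> G) (p : nat) :=
  forall K : set G, compact K ->
    exists f : G -> Qp p, [/\ C00 f, supnorm f = 1 &
      forall g, K g -> gact mul inv g f = f].

From mathcomp Require Import all_boot all_order all_algebra.
From mathcomp Require Import all_classical all_reals all_analysis Rstruct.
From mathcomp Require Import lra zify.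
Import Order.TTheory GRing.Theory Num.Theory.
Local Open Scope classical_set_scope.
Local Open Scope ring_scope.
Set Implicit Arguments. Unset Strict Implicit. Unset Printing Implicit Defensive.

(* A totally disconnected locally compact group has a compact open subgroup U
   (van Dantzig).
   (1) => (2): a compact set K lies in finitely many translates s U.  For
   F = s u s^-1 pick a finite E with U F <= E U; the subgroup B generated by E
   then satisfies U B <= B U, so B U is a subgroup.  It is open since it
   contains U, and compact since B lies in a compact subgroup by local
   ellipticity.  The indicator function of B U is K-invariant of norm 1.
   (4) => (1): for a finite F take f of norm 1 with |g f - f| < 1 on F.  Then
   f is Z_p-valued and its reduction modulo p is F-invariant, locally constant,
   nonzero and compactly supported; its stabilizer is a closed subgroup lying in
   a translate of that support, hence a compact subgroup containing F. *)

Section PadicAbs.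
Variable p : nat.
Implicit Types (x y : Qp p) (m n k : int).

Local Notation base := ((maxn p 2)%:R : Rdefinitions.R).

Lemma base_ge2 : 2 <= base.
Proof. by rewrite ler_nat leq_maxr. Qed.

Lemma base_gt0 : 0 < base.
Proof. exact: lt_le_trans base_ge2. Qed.

Lemma base_Vlt1 : base ^ (-1) < 1.
Proof. by rewrite exprN1 invf_lt1 ?base_gt0 //; have := base_ge2; lra. Qed.

Lemma qp_rep_eq0S x n : sval x (n + 1) = 0 -> sval x n = 0.
Proof.
case: x => r [r_range r_int _] /= r_n1.
have pn_gt0 := pbaseX_gt0 p n.
have /andP[r_ge0 r_lt] := r_range n.
set z := r n / pbase p ^ n.
have z_int : z \is a Num.int by rewrite -rpredN -mulNr -sub0r -r_n1.
have z_ge0 : 0 <= z by rewrite divr_ge0 // ltW.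
have z_lt1 : z < 1 by rewrite ltr_pdivrMr // mul1r.
have z0 : z = 0.
  move: z_int; rewrite intrEge0 // => /natrP[m zm].
  by move: z_lt1; rewrite zm ltrn1 ltnS leqn0 => /eqP ->.
by move/eqP: z0; rewrite mulf_eq0 invr_eq0 (gt_eqF pn_gt0) orbF => /eqP.
Qed.

Lemma qp_rep_eq0_le x m n : m <= n -> sval x n = 0 -> sval x m = 0.
Proof.
move=> le_mn; have [d ->] : exists d : nat, n = m + d%:Z.
  by exists `|n - m|%N; rewrite gez0_abs ?subr_ge0 // addrCA subrr addr0.
elim: d => [|d IHd]; first by rewrite addr0.
by move=> xd1; apply/IHd/qp_rep_eq0S; rewrite -addrA -[1]/(1%:Z) -PoszD addn1.
Qed.

Local Notation abs_values x := [set base ^ (- n) | n in [set n | sval x n = 0]].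

Lemma abs_values_neq0 x : abs_values x !=set0.
Proof. by case: (svalP x) => _ _ [N xN]; exists (base ^ (- N)), N => //; apply: xN. Qed.

Lemma abs_values_lb0 x : lbound (abs_values x) 0.
Proof. by move=> _ [n _ <-]; rewrite ltW // exprz_gt0 ?base_gt0. Qed.

Lemma qp_abs_ge0 x : 0 <= qp_abs x.
Proof. by apply: lb_le_inf; [apply: abs_values_neq0 | apply: abs_values_lb0]. Qed.

Lemma qp_abs_le x k : sval x k = 0 -> qp_abs x <= base ^ (- k).
Proof. by move=> xk; apply: ge_inf; [exists 0; apply: abs_values_lb0 | exists k]. Qed.

Lemma qp_abs_ge x k : sval x k <> 0 -> base ^ (1 - k) <= qp_abs x.
Proof.
move=> xk; apply: lb_le_inf (abs_values_neq0 x) _ => _ [n xn <-].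
have lt_nk : n < k.
  by rewrite ltNge; apply/negP => le_kn; apply/xk/(qp_rep_eq0_le le_kn).
by apply: ler_weXz2l; [have := base_ge2; lra | lia].
Qed.

Lemma qp_abs_eq0 x : (forall n, sval x n = 0) -> qp_abs x = 0.
Proof.
move=> x0; apply/eqP; rewrite eq_le qp_abs_ge0 andbT leNgt; apply/negP => a_gt0.
pose k := (Num.truncn (qp_abs x)^-1).+1.
have pk_gt0 : 0 < base ^+ k by rewrite exprn_gt0 ?base_gt0.
have k_lt_pk : (k < maxn p 2 ^ k)%N by apply/ltn_expl/leq_maxr.
have a_lt : (qp_abs x)^-1 < base ^+ k.
  by apply: lt_trans (truncnS_gt _) _; rewrite -natrX ltr_nat.
have := qp_abs_le (x0 k); rewrite -exprnN => a_le.
move: a_lt; rewrite invf_plt ?posrE // => /(le_lt_trans a_le).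
by rewrite ltxx.
Qed.

Lemma qp_abs_le1P x : qp_abs x <= 1 <-> sval x 0 = 0.
Proof.
split=> [x_le1|x0]; last by rewrite -(expr0z base) -oppr0 qp_abs_le.
apply: contrapT => /qp_abs_ge; rewrite subr0 expr1z => ge_base.
by have := base_ge2; lra.
Qed.

Lemma qp_abs_lt1P x : qp_abs x < 1 <-> sval x 1 = 0.
Proof.
split=> [x_lt1|x1]; last exact: le_lt_trans (qp_abs_le x1) base_Vlt1.
apply: contrapT => /qp_abs_ge; rewrite subrr expr0z => ge1.
by have := lt_le_trans x_lt1 ge1; rewrite ltxx.
Qed.

Lemma qp_abs0 : qp_abs (qp0 p) = 0.
Proof. exact: qp_abs_eq0. Qed.

Lemma qp_abs_subxx x : qp_abs (qp_sub x x) = 0.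
Proof. by apply: qp_abs_eq0 => n; rewrite /= /qp_sub_fun ltxx /= subrr addr0. Qed.

Lemma qp_abs_sub_le1 x y :
  qp_abs x <= 1 -> qp_abs y <= 1 -> qp_abs (qp_sub x y) <= 1.
Proof. by rewrite !qp_abs_le1P /= /qp_sub_fun => -> ->. Qed.

Lemma qp_abs_sub_lt1 x y : qp_abs (qp_sub x y) < 1 -> sval x 1 = sval y 1.
Proof.
rewrite qp_abs_lt1P /= /qp_sub_fun.
case: (svalP x) (svalP y) => x_range _ _ [y_range _ _].
have /andP[x0 x1] := x_range 1; have /andP[y0 y1] := y_range 1.
by case: ifP => _; [move: x1 y1; set P := pbase p ^ 1; lra | rewrite addr0; lra].
Qed.

Definition qp_one_rep (n : int) : rat := if 0 < n then 1 else 0.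

Lemma is_padic_one : is_padic p qp_one_rep.
Proof.
have base_ge2 : 2 <= pbase p by rewrite /pbase ler_nat leq_maxr.
split=> [n|n|]; rewrite /qp_one_rep.
- case: ifP => n_gt0; last by rewrite lexx pbaseX_gt0.
  rewrite ler01 /=; apply: lt_le_trans (_ : pbase p ^ 1 <= _).
    by rewrite expr1z; lra.
  by apply: ler_weXz2l; [lra | lia].
- case: (ltrgt0P n) => [n_gt0|n_lt0|->].
  + by rewrite (_ : 0 < n + 1 = true) ?subrr ?mul0r ?rpred0 //; lia.
  + by rewrite (_ : 0 < n + 1 = false) ?subrr ?mul0r ?rpred0 //; lia.
  + by rewrite add0r ltr01 subr0 expr0z divr1 rpred1.
- by exists 0 => n; rewrite ltNge => ->.
Qed.

Definition qp_one : Qp p := exist _ qp_one_rep is_padic_one.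

Lemma qp_one_neq0 : qp_one <> qp0 p.
Proof. by move=> /(congr1 (sval^~ 1)); rewrite /= /qp_one_rep ltr01; apply/eqP/oner_neq0. Qed.

Lemma qp_abs_one : qp_abs qp_one = 1.
Proof.
apply/eqP; rewrite eq_le; apply/andP; split; first exact/qp_abs_le1P.
rewrite -(expr0z base) -(subrr 1); apply: qp_abs_ge.
by rewrite /= /qp_one_rep ltr01; apply/eqP/oner_neq0.
Qed.

End PadicAbs.

Section Supnorm.
Variables (T : Type) (p : nat).
Implicit Types (f : T -> Qp p) (c : Rdefinitions.R).

Lemma supnorm_le f c : 0 <= c -> (forall x, qp_abs (f x) <= c) -> supnorm f <= c.
Proof.
move=> c_ge0 f_le; rewrite /supnorm.
have [->|/set0P S_neq0] := eqVneq [set qp_abs (f x) | x in [set: T]] set0.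
  by rewrite sup0.
by apply: ge_sup S_neq0 _ => _ [x _ <-].
Qed.

Lemma le_supnorm f c x : (forall y, qp_abs (f y) <= c) -> qp_abs (f x) <= supnorm f.
Proof.
move=> f_le; apply: sup_upper_bound; last by exists x.
by split; [exists (qp_abs (f x)), x | exists c => _ [y _ <-]].
Qed.

Lemma qp_abs_le_supnorm1 f x : supnorm f = 1 -> qp_abs (f x) <= 1.
Proof.
move=> f1; rewrite -f1; apply: sup_upper_bound; last by exists x.
by apply: contrapT => /sup_out; rewrite /supnorm in f1; rewrite f1 => /eqP; rewrite oner_eq0.
Qed.

End Supnorm.

Section CompactSets.
Variable T : topologicalType.
Implicit Types A B C K U W : set T.

Lemma compact_directed_closure C (I : Type) (D : set I) (X : I -> set T) :
  compact C -> (exists i, D i) -> (forall i, D i -> X i `<=` C) ->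
  (forall i j, D i -> D j -> exists2 k, D k & X k `<=` X i `&` X j) ->
  (forall i, D i -> X i !=set0) ->
  exists2 y, C y & forall i, D i -> closure (X i) y.
Proof.
move=> cC [i0 Di0] XC dirX X_neq0.
have F_filter : Filter (filter_from D X) by apply: filter_from_filter; [exists i0|].
have F_proper : ProperFilter (filter_from D X) by apply: filter_from_proper.
have F_C : filter_from D X C by exists i0 => //; apply: XC.
have [y [Cy y_cl]] := cC _ F_proper F_C.
by exists y => // i Di B By; apply: y_cl => //; exists i.
Qed.

Lemma compact_seq_cover K (O : T -> set T) : compact K ->
  (forall x, K x -> open (O x) /\ O x x) ->
  exists2 s : seq T, (forall x, x \in s -> K x) & K `<=` \bigcup_(x in [set` s]) O x.
Proof.
move=> cK O_nbhs; apply: contrapT => no_cover.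
pose D (s : seq T) := forall x, x \in s -> K x.
pose X (s : seq T) := K `\` \bigcup_(x in [set` s]) O x.
have [y Ky y_cl] : exists2 y, K y & forall s, D s -> closure (X s) y.
  apply: compact_directed_closure cK (ex_intro _ [::] _) _ _ _ => //.
  - by move=> s _; apply: subDsetl.
  - move=> s t Ds Dt; exists (s ++ t).
      by move=> x; rewrite mem_cat => /orP[/Ds|/Dt].
    by move=> z [Kz nz]; split; split=> // -[x xs Oz]; apply: nz; exists x => //=;
      rewrite mem_cat xs ?orbT.
  - move=> s Ds; apply/set0P/negP => /eqP Xs0; apply: no_cover; exists s => // z Kz.
    by apply: contrapT => nz; have : X s z by []; rewrite Xs0.
have [oOy Oyy] := O_nbhs y Ky.
have Dy : D [:: y] by move=> x; rewrite inE => /eqP ->.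
have [z [[_ nz] Oz]] := y_cl _ Dy _ (open_nbhs_nbhs (conj oOy Oyy)).
by apply: nz; exists y => //=; rewrite inE.
Qed.

Lemma closureI_closure_sub A W : closure (A `&` closure W) `<=` closure W.
Proof.
rewrite [X in _ `<=` X](closure_id _).1; last exact: closed_closure.
by apply: closureS; apply: subIsetr.
Qed.

Lemma hausdorff_compact_adherent A y : hausdorff_space T -> compact A ->
  (forall U, open U -> A `<=` U -> closure U y) -> A y.
Proof.
move=> hT cA y_cl.
have [z Az z_cl] : exists2 z, A z & forall W, open W /\ W y -> closure (A `&` closure W) z.
  apply: compact_directed_closure cA (ex_intro _ setT (conj openT I)) _ _ _.
  - by move=> W _; apply: subIsetl.
  - move=> U V [oU Uy] [oV Vy]; exists (U `&` V); first by split; [apply: openI|].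
    by move=> t [At /closureI[]].
  - move=> W [oW Wy]; apply/set0P/negP => /eqP AW0.
    have AsubC : A `<=` ~` closure W.
      by move=> t At clt; have : (A `&` closure W) t by []; rewrite AW0.
    have := y_cl _ (closed_openC (@closed_closure _ W)) AsubC W.
    case=> [|t [nclt Wt]]; first exact: open_nbhs_nbhs.
    exact/nclt/subset_closure.
suff -> : y = z by [].
apply: hT => P Q; rewrite nbhsE => -[W [oW Wy] WP] Qz.
have [t [Wt Qt]] := closureI_closure_sub (z_cl W (conj oW Wy)) Qz.
by exists t; split => //; apply: WP.
Qed.

Lemma hausdorff_compact_separation A B : hausdorff_space T ->
  compact A -> compact B -> A `&` B = set0 ->
  exists U, [/\ open U, A `<=` U & closure U `&` B = set0].
Proof.
move=> hT cA cB AB0; apply: contrapT => no_sep.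
have [y By y_cl] :
    exists2 y, B y & forall U, open U /\ A `<=` U -> closure (B `&` closure U) y.
  apply: compact_directed_closure cB (ex_intro _ setT (conj openT (@subsetT _ A))) _ _ _.
  - by move=> U _; apply: subIsetl.
  - move=> U V [oU AU] [oV AV]; exists (U `&` V).
      by split; [apply: openI | move=> t At; split; [apply: AU | apply: AV]].
    by move=> t [Bt /closureI[]].
  - move=> U [oU AU]; apply/set0P/negP => /eqP BU0; apply: no_sep.
    by exists U; split => //; rewrite setIC.
have Ay : A y.
  apply: hausdorff_compact_adherent => // U oU AU.
  exact: closureI_closure_sub (y_cl U (conj oU AU)).
by have : (A `&` B) y by []; rewrite AB0.
Qed.

Lemma locally_constant_clopen_preimage (X : Type) (phi : T -> X) (P : set X) :
  (forall x, \forall y \near x, phi y = phi x) -> clopen (phi @^-1` P).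
Proof.
move=> phi_loc; have open_pre Q : open (phi @^-1` Q).
  by rewrite openE => x Qx; apply: filterS (phi_loc x) => y phiy; rewrite /preimage /= phiy.
split; first exact: open_pre.
have -> : phi @^-1` P = ~` (phi @^-1` (~` P)) by rewrite preimage_setC setCK.
exact: open_closedC.
Qed.

Definition relclopen C x :=
  [set D | [/\ D x, D `<=` C, closed D & closed (C `\` D)]].

Definition quasi_component C x := \bigcap_(D in relclopen C x) D.

Lemma relclopen_self C x : C x -> closed C -> relclopen C x C.
Proof. by move=> Cx clC; split=> //; rewrite setDv; apply: closed0. Qed.

Lemma relclopenI C x D E :
  relclopen C x D -> relclopen C x E -> relclopen C x (D `&` E).
Proof.
move=> [Dx DC clD clCD] [Ex EC clE clCE]; split=> //.
- by move=> t [/DC].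
- exact: closedI.
- by rewrite setDIr; apply: closedU.
Qed.

Lemma quasi_component_sub_open C x W : compact C -> closed C -> C x -> open W ->
  quasi_component C x `<=` W -> exists2 D, relclopen C x D & D `<=` W.
Proof.
move=> cC clC Cx oW QW; apply: contrapT => no_D.
have [y Cy y_cl] : exists2 y, C y & forall D, relclopen C x D -> closure (D `\` W) y.
  apply: compact_directed_closure cC (ex_intro _ C (relclopen_self Cx clC)) _ _ _.
  - by move=> D [_ DC _ _] t [/DC].
  - move=> D E rD rE; exists (D `&` E); first exact: relclopenI.
    by move=> t [[Dt Et] nWt].
  - move=> D rD; apply/set0P/negP => /eqP DW0; apply: no_D; exists D => // t Dt.
    by apply: contrapT => nWt; have : (D `\` W) t by []; rewrite DW0.
have yDW D : relclopen C x D -> (D `\` W) y.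
  move=> rD; have : closed (D `\` W).
    by case: rD => _ _ clD _; apply: closedI => //; apply: open_closedC.
  by move/closure_id ->; apply: y_cl.
by have [_] := yDW C (relclopen_self Cx clC); apply; apply: QW => D /yDW[].
Qed.

Lemma quasi_component_sub_closed C x A1 A2 : hausdorff_space T ->
  compact C -> closed C -> C x -> closed A1 -> closed A2 -> A1 `&` A2 = set0 ->
  A1 `<=` C -> A2 `<=` C -> A1 x ->
  quasi_component C x `<=` A1 `|` A2 -> quasi_component C x `<=` A1.
Proof.
move=> hT cC clC Cx clA1 clA2 A12 A1C A2C A1x QA.
have [U [oU A1U clU_A2]] := hausdorff_compact_separation hT
  (subclosed_compact clA1 cC A1C) (subclosed_compact clA2 cC A2C) A12.
have [D rD DW] : exists2 D, relclopen C x D & D `<=` U `|` ~` closure U.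
  apply: quasi_component_sub_open => //.
    by apply: openU => //; apply/closed_openC/closed_closure.
  move=> t /QA[/A1U|A2t]; [by left | right => clUt].
  by have : (closure U `&` A2) t by []; rewrite clU_A2.
have DU : D `&` U = D `&` closure U.
  apply/seteqP; split=> t [Dt Ut]; split=> //; first exact: subset_closure.
  by case: (DW t Dt).
have rDU : relclopen C x (D `&` U).
  case: rD => Dx DC clD clCD; split.
  - by split; [|apply: A1U].
  - by move=> t [/DC].
  - by rewrite DU; apply: closedI => //; apply: closed_closure.
  - by rewrite setDIr; apply: closedU => //; apply: closedI => //; apply: open_closedC.
move=> t Qt; have [//|A2t] := QA t Qt.
have [_ /subset_closure clUt] := Qt _ rDU.
by have : (closure U `&` A2) t by []; rewrite clU_A2.
Qed.

Lemma quasi_component_connected C x : hausdorff_space T ->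
  compact C -> closed C -> C x -> connected (quasi_component C x).
Proof.
move=> hT cC clC Cx B [b Bb] [V oV BV] [F clF BF].
set Q := quasi_component C x in BV BF *.
have Qx : Q x by move=> D [].
have clQ : closed Q by apply: closed_bigI => D [].
have QC : Q `<=` C by move=> t /(_ C (relclopen_self Cx clC)).
have BQ : B `<=` Q by rewrite BV; apply: subIsetl.
have clB : closed B by rewrite BF; apply: closedI.
have clQB : closed (Q `\` B).
  rewrite BV setDIr setDv set0U.
  by apply: closedI => //; apply: open_closedC.
have B_QB : B `&` (Q `\` B) = set0 by apply/seteqP; split=> // t [? []].
have Q_split : Q `<=` B `|` (Q `\` B).
  by move=> t Qt; have [|] := pselect (B t); [left | right].
have BC : B `<=` C := subset_trans BQ QC.
have QB_C : Q `\` B `<=` C by move=> t [/QC].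
have [Bx|nBx] := pselect (B x).
  apply/seteqP; split=> //.
  exact: quasi_component_sub_closed hT cC clC Cx clB clQB B_QB BC QB_C Bx Q_split.
have Q_QB : Q `<=` Q `\` B.
  apply: quasi_component_sub_closed hT cC clC Cx clQB clB _ QB_C BC _ _ => //.
    by rewrite setIC.
  by rewrite setUC.
by have [] := Q_QB b (BQ b Bb).
Qed.

Lemma compact_open_nbhs x : hausdorff_space T -> locally_compact [set: T] ->
  totally_disconnected [set: T] -> exists V : set T, [/\ open V, compact V & V x].
Proof.
move=> hT lcT tdT; have := lcT x I; rewrite withinET => -[C C_nbhs [cC clC]].
have Cx : C x := nbhs_singleton C_nbhs.
(* Quasi-components in compact Hausdorff spaces are connected components. *)
have Q_x : quasi_component C x `<=` [set x].
  rewrite -(tdT x I); apply: connected_component_max => //; first by move=> D [].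
  exact: quasi_component_connected.
have [D [Dx DC clD clCD] D_int] : exists2 D, relclopen C x D & D `<=` C°.
    apply: quasi_component_sub_open => // [|t /Q_x -> //].
  exact: open_interior.
exists D; split=> //; last exact: subclosed_compact clD cC DC.
have -> : D = C° `&` ~` (C `\` D).
  apply/seteqP; split=> t; first by move=> Dt; split; [apply: D_int | case].
  move=> [Ct nCDt]; apply: contrapT => nDt; apply: nCDt; split=> //.
  exact: interior_subset.
by apply: openI; [apply: open_interior | apply: closed_openC].
Qed.

End CompactSets.

Definition is_group (T : Type) (mul : T -> T -> T) (inv : T -> T) (one : T) :=
  [/\ associative mul, left_id one mul, right_id one mul,
      left_inverse one inv mul & right_inverse one inv mul].

Section SubgroupGen.
Variables (T : Type) (mul : T -> T -> T) (inv : T -> T) (one : T).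
Implicit Types (E H : set T).

Local Notation subgroup := (is_subgroup mul inv one).

Definition subgroup_gen E := [set b | forall H, subgroup H -> E `<=` H -> H b].

Lemma subgroup_gen_subgroup E : subgroup (subgroup_gen E).
Proof.
split=> [H [H1 _ _] _ //|x y Bx By H sH EH|x Bx H sH EH].
  by case: (sH) => _ HM _; apply: HM; [apply: Bx | apply: By].
by case: (sH) => _ _ HV; apply: HV; apply: Bx.
Qed.

Lemma sub_subgroup_gen E : E `<=` subgroup_gen E.
Proof. by move=> e Ee H _ EH; apply: EH. Qed.

Lemma subgroup_gen_min E H : subgroup H -> E `<=` H -> subgroup_gen E `<=` H.
Proof. by move=> sH EH b; apply. Qed.

End SubgroupGen.

Section Group.
Variables (T : Type) (mul : T -> T -> T) (inv : T -> T) (one : T).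
Hypothesis hT : is_group mul inv one.
Implicit Types (x y z : T) (A B E F H U : set T).

Local Notation subgroup := (is_subgroup mul inv one).
Local Notation mulset A B := [set mul a b | a in A & b in B].

Lemma gmulA x y z : mul x (mul y z) = mul (mul x y) z. Proof. by case: hT. Qed.
Lemma gmul1g x : mul one x = x. Proof. by case: hT. Qed.
Lemma gmulg1 x : mul x one = x. Proof. by case: hT. Qed.
Lemma gmulVg x : mul (inv x) x = one. Proof. by case: hT. Qed.
Lemma gmulgV x : mul x (inv x) = one. Proof. by case: hT. Qed.

Lemma gmulKg x y : mul (inv x) (mul x y) = y.
Proof. by rewrite gmulA gmulVg gmul1g. Qed.

Lemma gmulKVg x y : mul x (mul (inv x) y) = y.
Proof. by rewrite gmulA gmulgV gmul1g. Qed.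

Lemma gmulgK x y : mul (mul y x) (inv x) = y.
Proof. by rewrite -gmulA gmulgV gmulg1. Qed.

Lemma ginv_uniq x y : mul x y = one -> y = inv x.
Proof. by move=> xy1; rewrite -(gmulKg x y) xy1 gmulg1. Qed.

Lemma ginvgK x : inv (inv x) = x.
Proof. by apply/esym/ginv_uniq; rewrite gmulVg. Qed.

Lemma ginvMg x y : inv (mul x y) = mul (inv y) (inv x).
Proof. by apply/esym/ginv_uniq; rewrite -gmulA gmulKVg gmulgV. Qed.

Lemma ginvg1 : inv one = one.
Proof. by apply/esym/ginv_uniq; rewrite gmul1g. Qed.

Definition stabilizer (X : Type) (phi : T -> X) :=
  [set h | forall x, phi (mul (inv h) x) = phi x].

Lemma stabilizer_subgroup (X : Type) (phi : T -> X) : subgroup (stabilizer phi).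
Proof.
split=> [x|g h Sg Sh x|h Sh x]; first by rewrite ginvg1 gmul1g.
  by rewrite ginvMg -gmulA Sh Sg.
by rewrite ginvgK -[in RHS](gmulKg h x) Sh.
Qed.

Lemma subgroup_sub_stabilizer H : subgroup H -> H `<=` stabilizer H.
Proof.
move=> [_ HM HV] h Hh x; apply/propext; split=> [Hhx|Hx]; last by apply: HM => //; apply: HV.
by rewrite -(gmulKVg h x); apply: HM.
Qed.

Lemma mulset_subgroup B U : subgroup B -> subgroup U ->
  mulset U B `<=` mulset B U -> subgroup (mulset B U).
Proof.
move=> [B1 BM BV] [U1 UM UV] UB_BU; split.
- by exists one => //; exists one => //; rewrite gmul1g.
- move=> _ _ [b1 Bb1 [u1 Uu1 <-]] [b2 Bb2 [u2 Uu2 <-]].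
  have [b Bb [u Uu bu]] : mulset B U (mul u1 b2) by apply: UB_BU; exists u1 => //; exists b2.
  exists (mul b1 b); first exact: BM.
  by exists (mul u u2); [apply: UM | rewrite -gmulA (gmulA b) bu !gmulA].
- move=> _ [b Bb [u Uu <-]]; rewrite ginvMg; apply: UB_BU.
  by exists (inv u); [apply: UV | exists (inv b); [apply: BV |]].
Qed.

Lemma subgroup_gen_mulset_commute U F E : subgroup U ->
  (forall f, F f -> F (inv f)) -> E `<=` mulset U F -> mulset U F `<=` mulset E U ->
  mulset U (subgroup_gen mul inv one E) `<=` mulset (subgroup_gen mul inv one E) U.
Proof.
move=> [U1 UM UV] F_inv E_UF UF_EU; set B := subgroup_gen mul inv one E.
have [B1 BM BV] := subgroup_gen_subgroup mul inv one E.
have BU_mulr z u : mulset B U z -> U u -> mulset B U (mul z u).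
  by move=> [b Bb [u' Uu' <-]] Uu; exists b => //; exists (mul u' u); rewrite ?gmulA; auto.
have UF_BU u f : U u -> F f -> mulset B U (mul u f).
  move=> Uu Ff; have [e Ee [u' Uu' <-]] : mulset E U (mul u f).
    by apply: UF_EU; exists u => //; exists f.
  by exists e; [apply: sub_subgroup_gen | exists u'].
pose P b := forall u, U u -> mulset B U (mul u b).
have PM x y : P x -> P y -> P (mul x y).
  move=> Px Py u Uu; have [b1 Bb1 [u1 Uu1 e1]] := Px u Uu.
  have [b2 Bb2 [u2 Uu2 e2]] := Py u1 Uu1.
  exists (mul b1 b2); first exact: BM.
  by exists u2; rewrite // -gmulA e2 gmulA e1 gmulA.
have sC : subgroup [set b | P b /\ P (inv b)].
  split=> [|x y [Px PVx] [Py PVy]|x [Px PVx]]; last by split=> //; rewrite ginvgK.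
    by split=> u Uu; exists one => //; exists u => //; rewrite ?ginvg1 gmulg1 ?gmul1g.
  by split; [apply: PM | rewrite ginvMg; apply: PM].
have EC : E `<=` [set b | P b /\ P (inv b)].
  move=> _ /E_UF[u0 Uu0 [f Ff <-]]; split=> u Uu.
    by rewrite gmulA; apply: UF_BU => //; apply: UM.
  by rewrite ginvMg gmulA; apply: BU_mulr; [apply: UF_BU; [|apply: F_inv] | apply: UV].
by move=> _ [u Uu [b /(subgroup_gen_min sC EC)[Pb _] <-]]; apply: Pb.
Qed.

End Group.

Section TopologicalGroup.
Variables (G : topologicalType) (mul : G -> G -> G) (inv : G -> G) (one : G).
Hypothesis hG : is_top_group mul inv one.
Implicit Types (A B K L U V W : set G).

Local Notation subgroup := (is_subgroup mul inv one).
Local Notation mulset A B := [set mul a b | a in A & b in B].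

Lemma top_group_is_group : is_group mul inv one.
Proof.
case: hG => mulA mul1 mulV _ _.
by split=> // x; [case: (mul1 x) | case: (mul1 x) | case: (mulV x) | case: (mulV x)].
Qed.

Local Notation grp := top_group_is_group.

Lemma continuous_mul : continuous (fun xy : G * G => mul xy.1 xy.2).
Proof. by case: hG. Qed.

Lemma continuous_ginv : continuous inv.
Proof. by case: hG. Qed.

Lemma continuous_mull a : continuous (mul a).
Proof.
move=> y; apply: (@continuous_comp _ _ _ (pair a) (fun xy => mul xy.1 xy.2)).
  by apply: cvg_pair; [apply: cvg_cst | apply: cvg_id].
exact: continuous_mul.
Qed.

Lemma continuous_mulr a : continuous (mul^~ a).
Proof.
move=> y; apply: (@continuous_comp _ _ _ (pair^~ a) (fun xy => mul xy.1 xy.2)).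
  by apply: cvg_pair; [apply: cvg_id | apply: cvg_cst].
exact: continuous_mul.
Qed.

Lemma nbhs_translate H h : nbhs one H -> nbhs h [set x | H (mul (inv h) x)].
Proof. by move=> H1; apply: continuous_mull; rewrite /= (gmulVg grp). Qed.

Lemma subgroup_open H : subgroup H -> nbhs one H -> open H.
Proof.
move=> [_ HM _] H1; rewrite openE => h Hh.
by apply: filterS (nbhs_translate h H1) => x /= Hx; rewrite -(gmulKVg grp h x); apply: HM.
Qed.

Lemma open_subgroup_closed H : subgroup H -> open H -> closed H.
Proof.
move=> [H1 HM HV] oH z clz.
have [w [Hw Hzw]] := clz _ (nbhs_translate z (open_nbhs_nbhs (conj oH H1))).
have := HM _ _ Hw (HV _ Hzw).
by rewrite (ginvMg grp) (ginvgK grp) (gmulA grp) (gmulgV grp) (gmul1g grp).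
Qed.

Lemma compact_mulr A c : compact A -> compact [set mul a c | a in A].
Proof. by apply: continuous_compact; apply/continuous_subspaceT/continuous_mulr. Qed.

Lemma compact_mulset A B : compact A -> compact B -> compact (mulset A B).
Proof.
move=> cA cB; rewrite image2E; apply: continuous_compact; last exact: compact_setX.
have -> : uncurry mul = (fun xy : G * G => mul xy.1 xy.2) by apply: funext => -[].
exact/continuous_subspaceT/continuous_mul.
Qed.

Lemma compact_translates_cover K U : compact K -> open U -> U one ->
  exists2 s : seq G, (forall x, x \in s -> K x) & K `<=` mulset [set` s] U.
Proof.
move=> cK oU U1.
have [s sK Ks] : exists2 s : seq G, (forall x, x \in s -> K x) &
    K `<=` \bigcup_(x in [set` s]) [set y | U (mul (inv x) y)].
  apply: compact_seq_cover cK _ => x _; split; last by rewrite /= (gmulVg grp).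
  by apply: open_comp oU => y _; apply: continuous_mull.
exists s => // y /Ks[x xs Uxy]; exists x => //.
by exists (mul (inv x) y); rewrite // (gmulKVg grp).
Qed.

Lemma stabilizer_closed (X : Type) (phi : G -> X) :
  (forall x, \forall y \near x, phi y = phi x) -> closed (stabilizer mul inv phi).
Proof.
move=> phi_loc.
have -> : stabilizer mul inv phi =
    \bigcap_(x in [set: G]) ((mul^~ x) \o inv) @^-1` (phi @^-1` [set phi x]).
  by apply/seteqP; split=> h Sh x => [_|]; apply: Sh.
apply: closed_bigI => x _; apply: preimage_closed.
  by move=> h _; apply: continuous_comp; [apply: continuous_ginv | apply: continuous_mulr].
exact: (locally_constant_clopen_preimage _ phi_loc).2.
Qed.

Lemma compact_open_tube V : compact V -> open V ->
  exists2 W, nbhs one W & forall w v, W w -> V v -> V (mul w v).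
Proof.
move=> cV oV; have /compact_near_coveringP V_cover := cV.
have V_near x : V x -> \forall x' \near x & w \near nbhs one, V (mul w x').
  move=> Vx; have : nbhs (one, x) [set wv : G * G | V (mul wv.1 wv.2)].
    by apply: continuous_mul; rewrite /= (gmul1g grp); apply: open_nbhs_nbhs.
  case=> -[W1 W2] /= [W1_1 W2_x] W12; exists (W2, W1) => //= -[x' w] [/= ? ?].
  exact: (W12 (w, x')).
have := V_cover G (nbhs one) (fun w x' => V (mul w x')) _ V_near.
move=> W_near; exists [set w | forall v, V v -> V (mul w v)] => [|w v].
  exact: W_near.
by apply.
Qed.

Lemma compact_open_subgroup : hausdorff_space G -> locally_compact [set: G] ->
  totally_disconnected [set: G] -> exists U, [/\ subgroup U, open U & compact U].
Proof.
move=> hausG lcG tdG; have [V [oV cV V1]] := compact_open_nbhs one hausG lcG tdG.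
have [W W1 WV] := compact_open_tube cV oV.
set N := stabilizer mul inv V.
have sN : subgroup N := stabilizer_subgroup grp V.
have N1 : nbhs one N.
  have Winv1 : nbhs one [set x | W (inv x)].
    by apply: continuous_ginv; rewrite /= (ginvg1 grp).
  apply: filterS (filterI W1 Winv1) => g [Wg WVg] x; apply/propext; split=> [Vgx|Vx].
    by rewrite -(gmulKVg grp g x); apply: WV.
  exact: WV.
have oN := subgroup_open sN N1.
exists N; split=> //; apply: subclosed_compact (open_subgroup_closed sN oN) cV _.
by move=> g Ng; rewrite -(Ng g) (gmulVg grp).
Qed.

Lemma compact_open_mulset_cover U (F : seq G) : compact U -> open U -> U one ->
  exists E : seq G,
    [set` E] `<=` mulset U [set` F] /\ mulset U [set` F] `<=` mulset [set` E] U.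
Proof.
move=> cU oU U1.
have /choice[t t_cover] : forall f, exists t : seq G,
    (forall e, e \in t -> [set mul u f | u in U] e) /\
    [set mul u f | u in U] `<=` mulset [set` t] U.
  move=> f; have [t ? ?] := compact_translates_cover (compact_mulr (c:=f) cU) oU U1.
  by exists t.
exists (flatten [seq t f | f <- F]); split.
  move=> e /flatten_mapP[f Ff /(t_cover f).1[u Uu <-]].
  by exists u => //; exists f.
move=> _ [u Uu [f Ff <-]].
have [e et [u' Uu' <-]] : mulset [set` t f] U (mul u f) by apply: (t_cover f).2; exists u.
by exists e; [apply/flatten_mapP; exists f | exists u'].
Qed.

Lemma locally_elliptic_compact_open_subgroup K : hausdorff_space G ->
  locally_compact [set: G] -> totally_disconnected [set: G] ->
  locally_elliptic mul inv one -> compact K ->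
  exists A, [/\ subgroup A, open A, compact A & K `<=` A].
Proof.
move=> hausG lcG tdG ellG cK.
have [U [sU oU cU]] := compact_open_subgroup hausG lcG tdG.
have [U1 _ _] := sU.
have [s _ Ks] := compact_translates_cover cK oU U1.
pose F := s ++ map inv s.
have F_inv f : f \in F -> inv f \in F.
  rewrite !mem_cat => /orP[fs|/mapP[g gs ->]]; last by rewrite (ginvgK grp) gs.
  by rewrite map_f ?orbT.
have [E [E_UF UF_EU]] := compact_open_mulset_cover F cU oU U1.
have [L [sL cL EL]] := ellG [set` E] (finite_seq E).
set B := subgroup_gen mul inv one [set` E].
have sB := subgroup_gen_subgroup mul inv one [set` E].
have sBU : subgroup (mulset B U) :=
  mulset_subgroup grp sB sU (subgroup_gen_mulset_commute grp sU F_inv E_UF UF_EU).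
have [_ BU_M _] := sBU.
have U_BU : U `<=` mulset B U.
  by move=> u Uu; exists one; [case: sB | exists u; rewrite ?(gmul1g grp)].
have F_BU : [set` F] `<=` mulset B U.
  move=> f Ff; have [e Ee [u Uu <-]] : mulset [set` E] U f.
    by apply: UF_EU; exists one => //; exists f; rewrite ?(gmul1g grp).
  by exists e; [apply: sub_subgroup_gen | exists u].
have oBU : open (mulset B U).
  by apply: subgroup_open sBU _; apply: filterS U_BU _; apply: open_nbhs_nbhs.
exists (mulset B U); split=> //.
  apply: subclosed_compact (open_subgroup_closed sBU oBU) (compact_mulset cL cU) _.
  by apply: image2_subset => //; apply: subgroup_gen_min.
move=> _ /Ks[x xs [u Uu <-]]; apply: BU_M; last exact: U_BU.
by apply: F_BU; rewrite /= mem_cat xs.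
Qed.

Lemma stabilizer_compact (X : Type) (phi : G -> X) (c : X) x0 :
  (forall x, \forall y \near x, phi y = phi x) -> compact [set y | phi y <> c] ->
  phi x0 <> c -> compact (stabilizer mul inv phi).
Proof.
move=> phi_loc c_supp phi_x0.
apply: subclosed_compact (stabilizer_closed phi_loc) (compact_mulr (c:=inv x0) c_supp) _.
move=> h Sh; exists (mul h x0); last by rewrite (gmulgK grp).
by rewrite /= -(Sh (mul h x0)) (gmulKg grp).
Qed.

End TopologicalGroup.

Section Indicator.
Variables (T : topologicalType) (p : nat).
Implicit Types (A : set T) (f : T -> Qp p).

Lemma locally_constant_qp_continuous f :
  (forall x, \forall y \near x, f y = f x) -> qp_continuous f.
Proof. by move=> f_loc x e e_gt0; apply: filterS (f_loc x) => y ->; rewrite qp_abs_subxx. Qed.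

Definition qp_indicator A x : Qp p := if pselect (A x) then qp_one p else qp0 p.

Lemma qp_indicator_in A x : A x -> qp_indicator A x = qp_one p.
Proof. by rewrite /qp_indicator; case: pselect. Qed.

Lemma qp_indicator_out A x : ~ A x -> qp_indicator A x = qp0 p.
Proof. by rewrite /qp_indicator; case: pselect. Qed.

Lemma qp_indicator_C00 A : clopen A -> compact A -> C00 (qp_indicator A).
Proof.
move=> [oA clA] cA; split.
  apply: locally_constant_qp_continuous => x; have [Ax|nAx] := pselect (A x).
    apply: filterS (open_nbhs_nbhs (conj oA Ax)) => y Ay.
    by rewrite !qp_indicator_in.
  apply: filterS (open_nbhs_nbhs (conj (closed_openC clA) nAx)) => y nAy.
  by rewrite !qp_indicator_out.
have -> : [set x | qp_indicator A x <> qp0 p] = A.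
  apply/seteqP; split=> x /=; last by move/qp_indicator_in ->; apply: qp_one_neq0.
  by move=> Ax_neq0; apply: contrapT => /qp_indicator_out.
by rewrite -(closure_id A).1.
Qed.

Lemma supnorm_qp_indicator A x : A x -> supnorm (qp_indicator A) = 1.
Proof.
have ind_le1 y : qp_abs (qp_indicator A y) <= 1.
  have [Ay|nAy] := pselect (A y).
    by rewrite qp_indicator_in ?qp_abs_one.
  by rewrite qp_indicator_out ?qp_abs0.
move=> Ax; apply/eqP; rewrite eq_le supnorm_le //=.
by rewrite -(qp_abs_one p) -(qp_indicator_in Ax) (le_supnorm _ ind_le1).
Qed.

End Indicator.

Section Reiter.
Variables (p : nat) (G : topologicalType) (mul : G -> G -> G) (inv : G -> G) (one : G).
Hypothesis hG : is_top_group mul inv one.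

Local Notation grp := (top_group_is_group hG).

Lemma locally_elliptic_reiter0 : hausdorff_space G -> locally_compact [set: G] ->
  totally_disconnected [set: G] -> locally_elliptic mul inv one -> reiter0 mul inv p.
Proof.
move=> hausG lcG tdG ellG K cK.
have [A [sA oA cA KA]] := locally_elliptic_compact_open_subgroup hG hausG lcG tdG ellG cK.
have [A1 _ _] := sA.
exists (qp_indicator p A); split.
- apply: qp_indicator_C00 cA; split=> //.
  exact: (open_subgroup_closed hG).
- exact: supnorm_qp_indicator A1.
- move=> g /KA Ag; apply/funext => x.
  by rewrite /gact /qp_indicator (subgroup_sub_stabilizer grp sA Ag).
Qed.

Lemma reiter0_reiter1 : reiter0 mul inv p -> reiter mul inv p 1.
Proof.
move=> R0 K cK; have [f [f_C00 f_norm f_inv]] := R0 K cK.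
exists f; split=> // g Kg; rewrite f_inv //.
by apply: le_lt_trans ltr01; apply: supnorm_le => // x; rewrite /fsub qp_abs_subxx.
Qed.

Lemma reiter_le (eps eps' : Rdefinitions.R) :
  eps <= eps' -> reiter mul inv p eps -> reiter mul inv p eps'.
Proof.
move=> le_eps R K cK; have [f [f_C00 f_norm f_eps]] := R K cK.
by exists f; split=> // g Kg; apply: lt_le_trans (f_eps g Kg) le_eps.
Qed.

Lemma reiter1_locally_elliptic : reiter mul inv p 1 -> locally_elliptic mul inv one.
Proof.
move=> R F finF.
have [f [[f_cont f_supp] f_norm f_inv]] := R F (finite_compact finF).
(* [phi x] is the residue of [f x] modulo [p]. *)
pose phi x := sval (f x) 1.
have f_le1 x : qp_abs (f x) <= 1 := qp_abs_le_supnorm1 x f_norm.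
have phi_inv g : F g -> forall y, phi (mul (inv g) y) = phi y.
  move=> Fg y; apply: qp_abs_sub_lt1; apply: le_lt_trans (f_inv g Fg).
  apply: (le_supnorm (f := fsub (gact mul inv g f) f) (c := 1)) => z.
  by apply: qp_abs_sub_le1; apply: f_le1.
have phi_loc x : \forall y \near x, phi y = phi x.
  by apply: filterS (f_cont x 1 ltr01) => y /qp_abs_sub_lt1.
have [x0 phi_x0] : exists x0, phi x0 <> 0.
  apply: contrapT => phi0.
  have : supnorm f <= (maxn p 2)%:R ^ (-1).
    apply: supnorm_le => [|x]; first by rewrite exprz_ge0 // ler0n.
    by apply: qp_abs_le; apply: contrapT => ?; apply: phi0; exists x.
  by rewrite f_norm => /le_lt_trans/(_ (base_Vlt1 p)); rewrite ltxx.
have supp_compact : compact [set y | phi y <> 0].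
  apply: subclosed_compact _ f_supp _.
    exact: (locally_constant_clopen_preimage (~` [set 0]) phi_loc).2.
  by move=> y phi_y; apply: subset_closure => fy0; apply: phi_y; rewrite /phi fy0.
exists (stabilizer mul inv phi); split.
- exact: (stabilizer_subgroup grp).
- exact: (stabilizer_compact hG phi_loc supp_compact phi_x0).
- exact: phi_inv.
Qed.

End Reiter.

Theorem theorem4p7 (p : nat) (hp : prime p) (G : topologicalType)
  (mul : G -> G -> G) (inv : G -> G) (one : G)
  (hG : is_tdlc_group mul inv one) :
  [<-> locally_elliptic mul inv one;
       reiter0 mul inv p;
       reiter0 mul inv p \/
         exists eps : Rdefinitions.R, 0 < eps <= 1 /\ reiter mul inv p eps;
       reiter mul inv p 1].
Proof.
case: hG => topG hausG lcG tdG; tfae.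
- exact: locally_elliptic_reiter0.
- by left.
- case=> [/reiter0_reiter1 //|[eps [/andP[_ eps_le1]]]].
  exact: reiter_le.
- exact: reiter1_locally_elliptic.
Qed.
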